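(* Let $(A_1,\cdot_1,\circ_1)$ and $(A_2,\cdot_2,\circ_2)$ be two anti-pre-Lie Poisson algebras. Define bilinear operations $\cdot$ and $\circ$ on $A_1\otimes A_2$ by $$(x_1\otimes x_2)\cdot(y_1\otimes y_2)=x_1\cdot_1 y_1\otimes x_2\cdot_2 y_2,$$ $$(x_1\otimes x_2)\circ(y_1\otimes y_2)=x_1\circ_1 y_1\otimes x_2\cdot_2 y_2+x_1\cdot_1 y_1\otimes x_2\circ_2 y_2,$$ for all $x_1,y_1\in A_1$, $x_2,y_2\in A_2$. Then $(A_1\otimes A_2,\cdot,\circ)$ is an anti-pre-Lie Poisson algebra.
   Context: All vector spaces are finite-dimensional over a field $\mathbb F$ of characteristic $0$. An anti-pre-Lie algebra is a vector space $A$ with a bilinear operation $\circ$ such that, writing $[x,y]=x\circ y-y\circ x$, for all $x,y,z\in A$: (i) $x\circ(y\circ z)-y\circ(x\circ z)=[y,x]\circ z$, and (ii) $[x,y]\circ z+[y,z]\circ x+[z,x]\circ y=0$. An anti-pre-Lie Poisson algebra is a triple $(A,\cdot,\circ)$ where $(A,\cdot)$ is a commutative associative algebra, $(A,\circ)$ is an anti-pre-Lie algebra, and for all $x,y,z\in A$: $2(x\circ y)\cdot z-2(y\circ x)\cdot z=y\cdot(x\circ z)-x\cdot(y\circ z)$ and $2x\circ(y\cdot z)=(z\cdot x)\circ y+z\cdot(x\circ y)$. *)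

From HB Require Import structures.
From mathcomp Require Import all_boot all_order all_algebra.
Set Implicit Arguments. Unset Strict Implicit. Unset Printing Implicit Defensive.
Import GRing.Theory.
Local Open Scope ring_scope.

Section Defs.
Variable F : fieldType.

Definition bilinear_op (V : lmodType F) (op : V -> V -> V) : Prop :=
  (forall (a : F) (x y z : V), op (a *: x + y) z = a *: op x z + op y z) /\
  (forall (a : F) (x y z : V), op x (a *: y + z) = a *: op x y + op x z).

Definition comm_assoc_algebra (V : lmodType F) (mul : V -> V -> V) : Prop :=
  bilinear_op mul /\
  (forall x y, mul x y = mul y x) /\
  (forall x y z, mul x (mul y z) = mul (mul x y) z).

Definition commut (V : lmodType F) (circ : V -> V -> V) (x y : V) : V :=
  circ x y - circ y x.

Definition anti_pre_Lie (V : lmodType F) (circ : V -> V -> V) : Prop :=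
  bilinear_op circ /\
  (forall x y z, circ x (circ y z) - circ y (circ x z) = circ (commut circ y x) z) /\
  (forall x y z, circ (commut circ x y) z + circ (commut circ y z) x
                 + circ (commut circ z x) y = 0).

Definition anti_pre_Lie_Poisson (V : lmodType F)
  (dot circ : V -> V -> V) : Prop :=
  comm_assoc_algebra dot /\ anti_pre_Lie circ /\
  (forall x y z, 2%:R *: dot (circ x y) z - 2%:R *: dot (circ y x) z
                 = dot y (circ x z) - dot x (circ y z)) /\
  (forall x y z, 2%:R *: circ x (dot y z) = circ (dot z x) y + dot z (circ x y)).

(** Concrete model: a finite-dimensional F-vector space of dimension n is
    'rV[F]_n, with standard basis e_i = delta_mx 0 i.  The tensor product
    F^n (x) F^m is modeled as 'M[F]_(n, m), with x (x) y := x^T *m y. *)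
Definition tens n m (x : 'rV[F]_n) (y : 'rV[F]_m) : 'M[F]_(n, m) := x^T *m y.

Definition basis_vec n (i : 'I_n) : 'rV[F]_n := delta_mx 0 i.

(** The unique bilinear operation on A1 (x) A2 with
    (x1 (x) x2) * (y1 (x) y2) = op1 x1 y1 (x) op2 x2 y2
    (for bilinear op1, op2), obtained by extending from basis tensors. *)
Definition tensor_op n m (op1 : 'rV[F]_n -> 'rV[F]_n -> 'rV[F]_n)
  (op2 : 'rV[F]_m -> 'rV[F]_m -> 'rV[F]_m) (T S : 'M[F]_(n, m)) : 'M[F]_(n, m) :=
  \sum_(i < n) \sum_(k < m) \sum_(j < n) \sum_(l < m)
     (T i k * S j l) *: tens (op1 (basis_vec i) (basis_vec j))
                             (op2 (basis_vec k) (basis_vec l)).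

Definition tensor_dot n m (dot1 : 'rV[F]_n -> 'rV[F]_n -> 'rV[F]_n)
  (dot2 : 'rV[F]_m -> 'rV[F]_m -> 'rV[F]_m) : 'M[F]_(n, m) -> 'M[F]_(n, m) -> 'M[F]_(n, m) :=
  tensor_op dot1 dot2.

Definition tensor_circ n m (dot1 circ1 : 'rV[F]_n -> 'rV[F]_n -> 'rV[F]_n)
  (dot2 circ2 : 'rV[F]_m -> 'rV[F]_m -> 'rV[F]_m) (T S : 'M[F]_(n, m)) : 'M[F]_(n, m) :=
  tensor_op circ1 dot2 T S + tensor_op dot1 circ2 T S.

End Defs.

From HB Require Import structures.
From mathcomp Require Import all_boot all_order all_algebra.
From mathcomp Require Import ring.
Import GRing.Theory.
Local Open Scope ring_scope.
Set Implicit Arguments. Unset Strict Implicit. Unset Printing Implicit Defensive.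

(* Both products of A1 ⊗ A2 are computed factorwise on pure tensors, and by
   bilinearity it suffices to check the axioms there.  Commutativity and
   associativity of the product, as well as the two compatibility conditions,
   then hold factor by factor.  The two anti-pre-Lie identities yield a copy of
   the same identity in each factor plus mixed terms u1 ⊗ u2, where u1 and u2
   are words of the shape x(y∘z), x∘(yz) or (xy)∘z.  The mixed terms cancel
   once each factor is rewritten in normal form, using the consequences
     x∘(yz) = y∘(xz) + [x,y]z,   [x,y]z + [y,z]x + [z,x]y = 0,
     (yz)∘x = (xy)∘z + [z,x]y
   of the compatibility conditions; the first needs 2 ≠ 0, the others 3 ≠ 0. *)

Section Bilinear.
Variables (F : fieldType) (V : lmodType F) (op : V -> V -> V).
Hypothesis op_bilin : bilinear_op op.

Lemma bilinDl x y z : op (x + y) z = op x z + op y z.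
Proof. by have := op_bilin.1 1 x y z; rewrite !scale1r. Qed.

Lemma bilinDr x y z : op x (y + z) = op x y + op x z.
Proof. by have := op_bilin.2 1 x y z; rewrite !scale1r. Qed.

Lemma bilin0l z : op 0 z = 0.
Proof. by apply/(addrI (op 0 z)); rewrite -bilinDl !addr0. Qed.

Lemma bilin0r x : op x 0 = 0.
Proof. by apply/(addrI (op x 0)); rewrite -bilinDr !addr0. Qed.

Lemma bilinZl a x z : op (a *: x) z = a *: op x z.
Proof. by have := op_bilin.1 a x 0 z; rewrite addr0 bilin0l addr0. Qed.

Lemma bilinZr a x y : op x (a *: y) = a *: op x y.
Proof. by have := op_bilin.2 a x y 0; rewrite addr0 bilin0r addr0. Qed.

Lemma bilinNl x z : op (- x) z = - op x z.
Proof. by rewrite -scaleN1r bilinZl scaleN1r. Qed.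

Lemma bilinNr x y : op x (- y) = - op x y.
Proof. by rewrite -scaleN1r bilinZr scaleN1r. Qed.

Lemma bilinBl x y z : op (x - y) z = op x z - op y z.
Proof. by rewrite bilinDl bilinNl. Qed.

Lemma bilinBr x y z : op x (y - z) = op x y - op x z.
Proof. by rewrite bilinDr bilinNr. Qed.

Lemma bilin_suml I (r : seq I) (P : pred I) (f : I -> V) z :
  op (\sum_(i <- r | P i) f i) z = \sum_(i <- r | P i) op (f i) z.
Proof. exact: (big_morph (op^~ z) (fun x y => bilinDl x y z) (bilin0l z)). Qed.

Lemma bilin_sumr I (r : seq I) (P : pred I) (f : I -> V) x :
  op x (\sum_(i <- r | P i) f i) = \sum_(i <- r | P i) op x (f i).
Proof. exact: (big_morph (op x) (bilinDr x) (bilin0r x)). Qed.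

End Bilinear.

Lemma bilinear_opD (F : fieldType) (V : lmodType F) (op op' : V -> V -> V) :
  bilinear_op op -> bilinear_op op' -> bilinear_op (fun x y => op x y + op' x y).
Proof.
move=> [opl opr] [opl' opr'].
by split=> a x y z; rewrite ?(opl, opl', opr, opr') scalerDr addrACA.
Qed.

Section CommAssoc.
Variables (F : fieldType) (V : lmodType F) (dot : V -> V -> V).
Hypothesis dot_ca : comm_assoc_algebra dot.

Lemma dotC x y : dot x y = dot y x. Proof. exact: dot_ca.2.1. Qed.
Lemma dotA x y z : dot x (dot y z) = dot (dot x y) z. Proof. exact: dot_ca.2.2. Qed.
Lemma dotCA x y z : dot x (dot y z) = dot y (dot x z).
Proof. by rewrite !dotA (dotC x y). Qed.
Lemma dotAC x y z : dot (dot x y) z = dot (dot x z) y.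
Proof. by rewrite -!dotA (dotC y z). Qed.

End CommAssoc.

Section AntiPreLiePoisson.
Variables (F : fieldType) (V : lmodType F) (dot circ : V -> V -> V).
Hypothesis aplp : anti_pre_Lie_Poisson dot circ.

Hypotheses (two_neq0 : 2%:R != 0 :> F) (three_neq0 : 3%:R != 0 :> F).

Let dot_ca := aplp.1.
Let dot_bilin := aplp.1.1.

Lemma circ_circ_swap x y z :
  circ x (circ y z) = circ y (circ x z) + circ (commut circ y x) z.
Proof. by rewrite -aplp.2.1.2.1 addrC subrK. Qed.

Lemma circ_commut_cyclic x y z :
  circ (commut circ x y) z = - (circ (commut circ y z) x + circ (commut circ z x) y).
Proof. by apply/eqP; rewrite -addr_eq0 addrA aplp.2.1.2.2. Qed.

Lemma dot_commut_circ x y z :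
  2%:R *: dot (commut circ x y) z = dot y (circ x z) - dot x (circ y z).
Proof. by rewrite /commut (bilinBl dot_bilin) scalerBr; apply: aplp.2.2.1. Qed.

Lemma circ_dot x y z : 2%:R *: circ x (dot y z) = circ (dot z x) y + dot z (circ x y).
Proof. exact: aplp.2.2.2. Qed.

Lemma dot_commutN x y z : dot (commut circ y x) z = - dot (commut circ x y) z.
Proof. by rewrite /commut !(bilinBl dot_bilin) opprB. Qed.

Lemma dot_commut_cyclic x y z :
  dot (commut circ x y) z = - (dot (commut circ y z) x + dot (commut circ z x) y).
Proof.
apply/eqP; rewrite -addr_eq0 addrA; apply/eqP.
set S := (X in X = 0).
(* Summing the first compatibility condition cyclically gives 2 S = - S. *)
have S2 : 2%:R *: S = - S.
  rewrite /S !scalerDr !dot_commut_circ /commut !(bilinBl dot_bilin) !opprD !opprK.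
  rewrite ![dot (circ _ _) _](dotC dot_ca).
  by rewrite [LHS](AC ((2*2)*2) (((6*3)*(2*5))*(4*1))).
have S3 : 3%:R *: S = 0 by rewrite scaler_nat mulrSr -scaler_nat S2 addNr.
by move/eqP: S3; rewrite scaler_eq0 (negbTE three_neq0) => /eqP.
Qed.

Lemma dot_circ_swap x y z :
  dot y (circ x z) = dot x (circ y z) + 2%:R *: dot (commut circ x y) z.
Proof. by rewrite dot_commut_circ addrC subrK. Qed.

Lemma circ_dotl x y z :
  circ (dot x y) z = 2%:R *: circ y (dot x z) - dot x (circ y z).
Proof. by rewrite (dotC dot_ca x z) circ_dot addrK. Qed.

Lemma circ_dot_swap x y z :
  circ x (dot y z) = circ y (dot x z) + dot (commut circ x y) z.
Proof.
apply/eqP; rewrite addrC -subr_eq; apply/eqP; apply: (scalerI two_neq0).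
rewrite scalerBr dot_commut_circ (dotC dot_ca y z) (dotC dot_ca x z) !circ_dot.
by rewrite (dotC dot_ca y x) opprD addrACA subrr add0r.
Qed.

Lemma circ_dot_rot x y z :
  circ (dot y z) x = circ (dot x y) z + dot (commut circ z x) y.
Proof.
have E1 : circ (dot z y) x + dot z (circ y x) = circ (dot x y) z + dot x (circ y z).
  by rewrite -!circ_dot (dotC dot_ca z x).
have cyc : dot (commut circ y x) z - dot (commut circ y z) x = dot (commut circ z x) y.
  by rewrite dot_commutN dot_commut_cyclic opprK [LHS]addrC addKr.
have skew : dot y (circ x z) - dot y (circ z x) = - dot (commut circ z x) y.
  by rewrite -(bilinBr dot_bilin) (dotC dot_ca) -/(commut circ x z) dot_commutN.
have E2 : dot x (circ y z) - dot z (circ y x) = dot (commut circ z x) y.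
  rewrite -[dot x _](subrK (dot y (circ x z))) -[dot z _](subrK (dot y (circ z x))).
  rewrite -!dot_commut_circ opprD addrACA -scalerBr cyc skew.
  by rewrite scaler_nat mulr2n addrK.
by rewrite (dotC dot_ca y z) -E2 addrA -E1 addrK.
Qed.

End AntiPreLiePoisson.

Section Tensor.
Variables (F : fieldType) (n m : nat).
Local Notation M := 'M[F]_(n, m).

Lemma tensE (x : 'rV[F]_n) (y : 'rV[F]_m) i j : tens x y i j = x 0 i * y 0 j.
Proof. by rewrite !mxE big_ord1 !mxE. Qed.

Lemma tens_basis i k : tens (basis_vec F i) (basis_vec F k) = delta_mx i k :> M.
Proof. by rewrite /tens /basis_vec trmx_delta mul_delta_mx. Qed.

Lemma bilin_rowE p (op : 'rV[F]_p -> 'rV[F]_p -> 'rV[F]_p) :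
  bilinear_op op -> forall x y q,
  op x y 0 q =
  \sum_(i < p) \sum_(j < p) x 0 i * y 0 j * op (basis_vec F i) (basis_vec F j) 0 q.
Proof.
move=> op_bilin x y q.
rewrite {1}(row_sum_delta x) (bilin_suml op_bilin) summxE; apply: eq_bigr => i _.
rewrite (bilinZl op_bilin) {1}(row_sum_delta y) (bilin_sumr op_bilin) scaler_sumr summxE.
by apply: eq_bigr => j _; rewrite (bilinZr op_bilin) scalerA !mxE.
Qed.

Lemma tensor_op_bilin op1 op2 : bilinear_op (@tensor_op F n m op1 op2).
Proof.
split=> a T T' S; rewrite /tensor_op scaler_sumr -big_split /=; apply: eq_bigr => i _;
  rewrite scaler_sumr -big_split /=; apply: eq_bigr => k _;
  rewrite scaler_sumr -big_split /=; apply: eq_bigr => j _;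
  rewrite scaler_sumr -big_split /=; apply: eq_bigr => l _;
  by rewrite !mxE scalerA -scalerDl; congr (_ *: _); ring.
Qed.

Lemma tensor_op_tens op1 op2 : bilinear_op op1 -> bilinear_op op2 ->
  forall x1 x2 y1 y2,
  tensor_op op1 op2 (tens x1 x2) (tens y1 y2) = tens (op1 x1 y1) (op2 x2 y2) :> M.
Proof.
move=> op1_bilin op2_bilin x1 x2 y1 y2; apply/matrixP => p q.
rewrite tensE (bilin_rowE op1_bilin) (bilin_rowE op2_bilin) summxE mulr_suml.
apply: eq_bigr => i _; rewrite summxE; under eq_bigr => k _ do rewrite summxE.
rewrite exchange_big mulr_suml; apply: eq_bigr => j _ /=.
rewrite mulr_sumr; apply: eq_bigr => k _; rewrite summxE mulr_sumr; apply: eq_bigr => l _.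
by rewrite mxE !tensE; ring.
Qed.

Lemma tensor_circ_tens dot1 circ1 dot2 circ2 :
  bilinear_op dot1 -> bilinear_op circ1 -> bilinear_op dot2 -> bilinear_op circ2 ->
  forall x1 x2 y1 y2,
  tensor_circ dot1 circ1 dot2 circ2 (tens x1 x2) (tens y1 y2) =
  tens (circ1 x1 y1) (dot2 x2 y2) + tens (dot1 x1 y1) (circ2 x2 y2) :> M.
Proof. by move=> *; rewrite /tensor_circ !tensor_op_tens. Qed.

Section Extension.
Variable V : lmodType F.

Lemma linear_tens_eq0 (f : M -> V) :
  linear f -> (forall x y, f (tens x y) = 0) -> forall T, f T = 0.
Proof.
move=> f_lin f_tens T.
pose lf : {linear M -> V} := HB.pack f (GRing.isLinear.Build _ _ _ _ f f_lin).
rewrite -[f T]/(lf T) (matrix_sum_delta T) linear_sum big1 // => i _.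
rewrite linear_sum big1 // => k _.
by rewrite linearZ /= -tens_basis f_tens scaler0.
Qed.

Lemma bilinear_tens_eq (Phi Psi : M -> M -> V) :
  (forall S, linear (fun T => Phi T S - Psi T S)) ->
  (forall T, linear (fun S => Phi T S - Psi T S)) ->
  (forall x1 x2 y1 y2, Phi (tens x1 x2) (tens y1 y2) = Psi (tens x1 x2) (tens y1 y2)) ->
  forall T S, Phi T S = Psi T S.
Proof.
move=> linT linS eq_tens T S; apply: subr0_eq.
apply: (linear_tens_eq0 (linT S)) => x1 x2.
apply: (linear_tens_eq0 (linS (tens x1 x2))) => y1 y2.
by rewrite eq_tens subrr.
Qed.

Lemma trilinear_tens_eq (Phi Psi : M -> M -> M -> V) :
  (forall S U, linear (fun T => Phi T S U - Psi T S U)) ->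
  (forall T U, linear (fun S => Phi T S U - Psi T S U)) ->
  (forall T S, linear (fun U => Phi T S U - Psi T S U)) ->
  (forall x1 x2 y1 y2 z1 z2, Phi (tens x1 x2) (tens y1 y2) (tens z1 z2) =
                             Psi (tens x1 x2) (tens y1 y2) (tens z1 z2)) ->
  forall T S U, Phi T S U = Psi T S U.
Proof.
move=> linT linS linU eq_tens T S U; apply: subr0_eq.
apply: (linear_tens_eq0 (linT S U)) => x1 x2.
apply: (linear_tens_eq0 (linS (tens x1 x2) U)) => y1 y2.
apply: (linear_tens_eq0 (linU (tens x1 x2) (tens y1 y2))) => z1 z2.
by rewrite eq_tens subrr.
Qed.

End Extension.

End Tensor.

Ltac tens_ring := apply/matrixP => i j; rewrite !mxE ?big_ord1 ?mxE; ring.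

Section TensorProduct.
Variables (F : fieldType) (n m : nat).
Hypothesis charF0 : [pchar F] =i pred0.
Variables (dot1 circ1 : 'rV[F]_n -> 'rV[F]_n -> 'rV[F]_n).
Variables (dot2 circ2 : 'rV[F]_m -> 'rV[F]_m -> 'rV[F]_m).
Hypotheses (aplp1 : anti_pre_Lie_Poisson dot1 circ1)
           (aplp2 : anti_pre_Lie_Poisson dot2 circ2).
Variables D C : 'M[F]_(n, m) -> 'M[F]_(n, m) -> 'M[F]_(n, m).
Hypotheses (D_bilin : bilinear_op D) (C_bilin : bilinear_op C).
Hypothesis D_tens : forall x1 x2 y1 y2,
  D (tens x1 x2) (tens y1 y2) = tens (dot1 x1 y1) (dot2 x2 y2).
Hypothesis C_tens : forall x1 x2 y1 y2,
  C (tens x1 x2) (tens y1 y2) =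
  tens (circ1 x1 y1) (dot2 x2 y2) + tens (dot1 x1 y1) (circ2 x2 y2).

Let two_neq0 : 2%:R != 0 :> F. Proof. by rewrite (pcharf0P F).1. Qed.
Let three_neq0 : 3%:R != 0 :> F. Proof. by rewrite (pcharf0P F).1. Qed.

Lemma commut_tens x1 x2 y1 y2 :
  commut C (tens x1 x2) (tens y1 y2) =
  tens (commut circ1 x1 y1) (dot2 x2 y2) + tens (dot1 x1 y1) (commut circ2 x2 y2).
Proof. by rewrite /commut !C_tens (dotC aplp1.1 y1) (dotC aplp2.1 y2); tens_ring. Qed.

Ltac linear_by_bilinearity :=
  move=> *; move=> a u v /=; rewrite /commut;
  rewrite ?(bilinDl C_bilin, bilinDr C_bilin, bilinNl C_bilin, bilinNr C_bilin,
            bilinZl C_bilin, bilinZr C_bilin, bilinDl D_bilin, bilinDr D_bilin,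
            bilinNl D_bilin, bilinNr D_bilin, bilinZl D_bilin, bilinZr D_bilin);
  tens_ring.

Lemma tensor_dotC T S : D T S = D S T.
Proof.
move: T S; apply: bilinear_tens_eq; try by linear_by_bilinearity.
by move=> x1 x2 y1 y2; rewrite !D_tens (dotC aplp1.1 x1) (dotC aplp2.1 x2).
Qed.

Lemma tensor_dotA T S U : D T (D S U) = D (D T S) U.
Proof.
move: T S U; apply: trilinear_tens_eq; try by linear_by_bilinearity.
by move=> x1 x2 y1 y2 z1 z2; rewrite !D_tens (dotA aplp1.1) (dotA aplp2.1).
Qed.

Lemma tensor_circ_circ_swap T S U : C T (C S U) - C S (C T U) = C (commut C S T) U.
Proof.
move: T S U; apply: trilinear_tens_eq; try by linear_by_bilinearity.
move=> x1 x2 y1 y2 z1 z2.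
rewrite commut_tens !(bilinDl C_bilin) !C_tens !(bilinDr C_bilin) !C_tens.
rewrite -(dotA aplp1.1 y1) (dotCA aplp1.1 y1) -(dotA aplp2.1 y2) (dotCA aplp2.1 y2).
rewrite (circ_circ_swap aplp1 x1 y1 z1) (circ_circ_swap aplp2 x2 y2 z2).
rewrite (dotC aplp1.1 y1 x1) (dotC aplp2.1 y2 x2).
rewrite (circ_dotl aplp1 x1 y1 z1) (circ_dotl aplp2 x2 y2 z2).
rewrite (circ_dot_swap aplp1 two_neq0 x1 y1 z1) (circ_dot_swap aplp2 two_neq0 x2 y2 z2).
rewrite (dot_circ_swap aplp1 x1 y1 z1) (dot_circ_swap aplp2 x2 y2 z2).
rewrite (dot_commutN aplp1 x1 y1 z1) (dot_commutN aplp2 x2 y2 z2).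
tens_ring.
Qed.

Lemma tensor_commut_circ_cyclic T S U :
  C (commut C T S) U + C (commut C S U) T + C (commut C U T) S = 0.
Proof.
move: T S U; apply: trilinear_tens_eq; try by linear_by_bilinearity.
move=> x1 x2 y1 y2 z1 z2.
rewrite !commut_tens !(bilinDl C_bilin) !C_tens.
rewrite (dotAC aplp1.1 z1 x1 y1) (dotC aplp1.1 z1 y1) (dotC aplp1.1 (dot1 y1 z1) x1).
rewrite (dotAC aplp2.1 z2 x2 y2) (dotC aplp2.1 z2 y2) (dotC aplp2.1 (dot2 y2 z2) x2).
rewrite -(dotA aplp1.1 x1 y1 z1) -(dotA aplp2.1 x2 y2 z2).
rewrite (circ_commut_cyclic aplp1 x1 y1 z1) (circ_commut_cyclic aplp2 x2 y2 z2).
rewrite (circ_dot_rot aplp1 three_neq0 y1 z1 x1) (circ_dot_rot aplp1 three_neq0 x1 y1 z1).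
rewrite (circ_dot_rot aplp2 three_neq0 y2 z2 x2) (circ_dot_rot aplp2 three_neq0 x2 y2 z2).
rewrite (dot_commut_cyclic aplp1 three_neq0 x1 y1 z1).
rewrite (dot_commut_cyclic aplp2 three_neq0 x2 y2 z2).
tens_ring.
Qed.

Lemma tensor_dot_circ_skew T S U :
  2%:R *: D (C T S) U - 2%:R *: D (C S T) U = D S (C T U) - D T (C S U).
Proof.
move: T S U; apply: trilinear_tens_eq; try by linear_by_bilinearity.
move=> x1 x2 y1 y2 z1 z2.
rewrite !C_tens !(bilinDl D_bilin) !(bilinDr D_bilin) !D_tens.
rewrite (dotC aplp1.1 y1 x1) (dotC aplp2.1 y2 x2) -(dotA aplp1.1 x1) -(dotA aplp2.1 x2).
rewrite (dotCA aplp1.1 y1 x1 z1) (dotCA aplp2.1 y2 x2 z2).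
rewrite (dot_circ_swap aplp1 x1 y1 z1) (dot_circ_swap aplp2 x2 y2 z2).
rewrite /commut (bilinBl aplp1.1.1) (bilinBl aplp2.1.1).
tens_ring.
Qed.

Lemma tensor_circ_dot T S U : 2%:R *: C T (D S U) = C (D U T) S + D U (C T S).
Proof.
move: T S U; apply: trilinear_tens_eq; try by linear_by_bilinearity.
move=> x1 x2 y1 y2 z1 z2.
rewrite !D_tens !C_tens (bilinDr D_bilin) !D_tens.
rewrite (circ_dotl aplp1 z1 x1 y1) (circ_dotl aplp2 z2 x2 y2).
rewrite -(dotA aplp1.1 z1 x1 y1) -(dotA aplp2.1 z2 x2 y2).
rewrite (dotCA aplp1.1 z1 x1 y1) (dotCA aplp2.1 z2 x2 y2).
rewrite (dotC aplp1.1 z1 y1) (dotC aplp2.1 z2 y2).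
tens_ring.
Qed.

Lemma tensor_anti_pre_Lie_Poisson : anti_pre_Lie_Poisson D C.
Proof.
split; [split; [exact: D_bilin | split] | split; [split; [exact: C_bilin | split] | split]].
- exact: tensor_dotC.
- exact: tensor_dotA.
- exact: tensor_circ_circ_swap.
- exact: tensor_commut_circ_cyclic.
- exact: tensor_dot_circ_skew.
- exact: tensor_circ_dot.
Qed.

End TensorProduct.

Theorem theorem3p47 (F : fieldType) (HF : [pchar F] =i pred0) (n m : nat)
  (dot1 circ1 : 'rV[F]_n -> 'rV[F]_n -> 'rV[F]_n)
  (dot2 circ2 : 'rV[F]_m -> 'rV[F]_m -> 'rV[F]_m) :
  anti_pre_Lie_Poisson dot1 circ1 ->
  anti_pre_Lie_Poisson dot2 circ2 ->
  anti_pre_Lie_Poisson (tensor_dot dot1 dot2) (tensor_circ dot1 circ1 dot2 circ2).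
Proof.
move=> aplp1 aplp2; apply: (tensor_anti_pre_Lie_Poisson HF aplp1 aplp2).
- exact: tensor_op_bilin.
- exact: bilinear_opD (tensor_op_bilin _ _) (tensor_op_bilin _ _).
- exact: tensor_op_tens aplp1.1.1 aplp2.1.1.
- exact: tensor_circ_tens aplp1.1.1 aplp1.2.1.1 aplp2.1.1 aplp2.2.1.1.
Qed.
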